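(* Let $\mathcal L$ be a coherent differential summable resource category (see context). Then for all objects $X_0,X_1$ the following equalities hold in $\mathcal L$: $$\partial_{X_0\&X_1}\circ\,!(SX_0\&\iota_{0,X_1})\circ m^2_{SX_0,X_1}=S(m^2_{X_0,X_1})\circ\varphi^0_{!X_0,!X_1}\circ(\partial_{X_0}\otimes !X_1)$$ as morphisms $!SX_0\otimes !X_1\to S!(X_0\& X_1)$, and symmetrically $$\partial_{X_0\&X_1}\circ\,!(\iota_{0,X_0}\&SX_1)\circ m^2_{X_0,SX_1}=S(m^2_{X_0,X_1})\circ\varphi^1_{!X_0,!X_1}\circ(!X_0\otimes \partial_{X_1}).$$
   Context: $\mathcal L$ is a symmetric monoidal closed category (tensor $\otimes$, unit $1$) with finite cartesian products ($X_0\& X_1$, projections $p_0,p_1$, terminal object $\top$), with a resource comonad $(!,\mathrm{der},\mathrm{dig})$ and Seely isomorphisms $m^0\in\mathcal L(1,!\top)$, $m^2_{X_0,X_1}\in\mathcal L(!X_0\otimes!X_1,!(X_0\&X_1))$ (a categorical model of linear logic); objects written in place of morphisms denote identities. $\mathcal L$ has zero morphisms and a summability structure $(S,\pi_0,\pi_1,\sigma)$: $S$ an endofunctor, $\pi_0,\pi_1,\sigma:S\Rightarrow\mathrm{Id}$ natural, $\pi_0,\pi_1$ jointly monic; $f_0,f_1\in\mathcal L(X,Y)$ are summable if some (unique) $\langle f_0,f_1\rangle\in\mathcal L(X,SY)$ has $\pi_i\circ\langle f_0,f_1\rangle=f_i$, and then $f_0+f_1=\sigma\circ\langle f_0,f_1\rangle$;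 it satisfies the axioms of Ehrhard's coherent differentiation (homsets are partial commutative monoids with neutral $0$, composition and $\otimes$ distribute over defined sums). $\iota_0=\langle\mathrm{id},0\rangle$; the flip $c:S^2\Rightarrow S^2$ with $\pi_i\pi_jc=\pi_j\pi_i$; $\tau:S^2\Rightarrow S$ with $\pi_0\tau=\pi_0\pi_0$, $\pi_1\tau=\pi_1\pi_0+\pi_0\pi_1$. $S$ preserves products strictly ($S(X_0\&X_1)=SX_0\&SX_1$, $Sp_i=p_i$). The tensorial strength $\varphi^0_{X_0,X_1}\in\mathcal L(SX_0\otimes X_1,S(X_0\otimes X_1))$ is characterised by $\pi_i\circ\varphi^0=\pi_i\otimes X_1$, and $\varphi^1_{X_0,X_1}\in\mathcal L(X_0\otimes SX_1,S(X_0\otimes X_1))$ by $\pi_i\circ\varphi^1=X_0\otimes\pi_i$; $L_{X_0,X_1}\in\mathcal L(SX_0\otimes SX_1,S(X_0\otimes X_1))$ is characterised by $\pi_0L=\pi_0\otimes\pi_0$ and $\pi_1L=\pi_1\otimes\pi_0+\pi_0\otimes\pi_1$. A coherent differential structure is a natural $\partial_X\in\mathcal L(!SX,S!X)$ with: $\pi_0\partial_X=!\pi_0$; $\partial_X\circ!\iota_0=\iota_0$ and $\tau\circ S\partial_X\circ\partial_{SX}=\partial_X\circ!\tau$; $S\mathrm{der}_X\circ\partial_X=\mathrm{der}_{SX}$ and $S\mathrm{dig}_X\circ\partial_X=\partial_{!X}\circ!\partial_X\circ\mathrm{dig}_{SX}$; $S(m^0)^{-1}\circ\partial_\top=\iota_0\circ(m^0)^{-1}\circ!0$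 and $S(m^2_{X_0,X_1})^{-1}\circ\partial_{X_0\&X_1}=L_{!X_0,!X_1}\circ(\partial_{X_0}\otimes\partial_{X_1})\circ(m^2_{SX_0,SX_1})^{-1}$; $c\circ S\partial_X\circ\partial_{SX}=S\partial_X\circ\partial_{SX}\circ!c$. *)

Set Implicit Arguments.
Unset Strict Implicit.

Declare Scope cat_scope.
Delimit Scope cat_scope with cat.
Open Scope cat_scope.

Record Category := {
  ob :> Type;
  hom : ob -> ob -> Type;
  idm : forall X : ob, hom X X;
  comp : forall X Y Z : ob, hom Y Z -> hom X Y -> hom X Z;
  comp_assoc : forall (X Y Z W : ob) (f : hom X Y) (g : hom Y Z) (h : hom Z W),
      comp h (comp g f) = comp (comp h g) f;
  comp_id_l : forall (X Y : ob) (f : hom X Y), comp (idm Y) f = f;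
  comp_id_r : forall (X Y : ob) (f : hom X Y), comp f (idm X) = f
}.
Arguments hom {c} X Y.
Arguments idm {c} X.
Arguments comp {c X Y Z} g f.
Notation "g ∘ f" := (comp g f) (at level 40, left associativity) : cat_scope.

Definition cast {C : Category} {X Y : C} (e : X = Y) : hom X Y :=
  match e in _ = Y' return hom X Y' with eq_refl => idm X end.

Record SymMonClosed (C : Category) := {
  tens : C -> C -> C;
  tens_hom : forall (X X' Y Y' : C), hom X X' -> hom Y Y' -> hom (tens X Y) (tens X' Y');
  tens_id : forall X Y : C, tens_hom (idm X) (idm Y) = idm (tens X Y);
  tens_comp : forall (X X' X'' Y Y' Y'' : C) (f : hom X X') (f' : hom X' X'')
      (g : hom Y Y') (g' : hom Y' Y''),
      tens_hom (f' ∘ f) (g' ∘ g) = tens_hom f' g' ∘ tens_hom f g;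
  unitob : C;
  assoc : forall X Y Z : C, hom (tens (tens X Y) Z) (tens X (tens Y Z));
  assoc_inv : forall X Y Z : C, hom (tens X (tens Y Z)) (tens (tens X Y) Z);
  assoc_iso1 : forall X Y Z : C, assoc_inv X Y Z ∘ assoc X Y Z = idm _;
  assoc_iso2 : forall X Y Z : C, assoc X Y Z ∘ assoc_inv X Y Z = idm _;
  assoc_nat : forall (X X' Y Y' Z Z' : C) (f : hom X X') (g : hom Y Y') (h : hom Z Z'),
      assoc X' Y' Z' ∘ tens_hom (tens_hom f g) h
      = tens_hom f (tens_hom g h) ∘ assoc X Y Z;
  lunit : forall X : C, hom (tens unitob X) X;
  lunit_inv : forall X : C, hom X (tens unitob X);
  lunit_iso1 : forall X : C, lunit_inv X ∘ lunit X = idm _;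
  lunit_iso2 : forall X : C, lunit X ∘ lunit_inv X = idm _;
  lunit_nat : forall (X Y : C) (f : hom X Y),
      f ∘ lunit X = lunit Y ∘ tens_hom (idm unitob) f;
  runit : forall X : C, hom (tens X unitob) X;
  runit_inv : forall X : C, hom X (tens X unitob);
  runit_iso1 : forall X : C, runit_inv X ∘ runit X = idm _;
  runit_iso2 : forall X : C, runit X ∘ runit_inv X = idm _;
  runit_nat : forall (X Y : C) (f : hom X Y),
      f ∘ runit X = runit Y ∘ tens_hom f (idm unitob);
  symm : forall X Y : C, hom (tens X Y) (tens Y X);
  symm_inv : forall X Y : C, symm Y X ∘ symm X Y = idm _;
  symm_nat : forall (X X' Y Y' : C) (f : hom X X') (g : hom Y Y'),
      tens_hom g f ∘ symm X Y = symm X' Y' ∘ tens_hom f g;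
  pentagon : forall W X Y Z : C,
      assoc W X (tens Y Z) ∘ assoc (tens W X) Y Z
      = tens_hom (idm W) (assoc X Y Z) ∘ assoc W (tens X Y) Z
        ∘ tens_hom (assoc W X Y) (idm Z);
  triangle : forall X Y : C,
      tens_hom (idm X) (lunit Y) ∘ assoc X unitob Y = tens_hom (runit X) (idm Y);
  hexagon : forall X Y Z : C,
      assoc Y Z X ∘ symm X (tens Y Z) ∘ assoc X Y Z
      = tens_hom (idm Y) (symm X Z) ∘ assoc Y X Z ∘ tens_hom (symm X Y) (idm Z);
  lin : C -> C -> C;
  ev : forall X Y : C, hom (tens (lin X Y) X) Y;
  cur : forall (Z X Y : C), hom (tens Z X) Y -> hom Z (lin X Y);
  cur_beta : forall (Z X Y : C) (f : hom (tens Z X) Y),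
      ev X Y ∘ tens_hom (cur f) (idm X) = f;
  cur_eta : forall (Z X Y : C) (g : hom Z (lin X Y)),
      cur (ev X Y ∘ tens_hom g (idm X)) = g
}.

Record Cartesian (C : Category) := {
  wth : C -> C -> C;
  p0 : forall X Y : C, hom (wth X Y) X;
  p1 : forall X Y : C, hom (wth X Y) Y;
  pair : forall (Z X Y : C), hom Z X -> hom Z Y -> hom Z (wth X Y);
  pair_p0 : forall (Z X Y : C) (f : hom Z X) (g : hom Z Y), p0 X Y ∘ pair f g = f;
  pair_p1 : forall (Z X Y : C) (f : hom Z X) (g : hom Z Y), p1 X Y ∘ pair f g = g;
  pair_eta : forall (Z X Y : C) (h : hom Z (wth X Y)), pair (p0 X Y ∘ h) (p1 X Y ∘ h) = h;
  top : C;
  trm : forall X : C, hom X top;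
  trm_uniq : forall (X : C) (f : hom X top), f = trm X
}.

Definition wth_hom {C : Category} (P : Cartesian C) {X0 X1 Y0 Y1 : C}
  (f0 : hom X0 Y0) (f1 : hom X1 Y1) : hom (wth P X0 X1) (wth P Y0 Y1) :=
  pair P (f0 ∘ p0 P X0 X1) (f1 ∘ p1 P X0 X1).

Definition wth_assoc_inv {C : Category} (P : Cartesian C) (X Y Z : C)
  : hom (wth P X (wth P Y Z)) (wth P (wth P X Y) Z) :=
  pair P (pair P (p0 P X (wth P Y Z)) (p0 P Y Z ∘ p1 P X (wth P Y Z)))
         (p1 P Y Z ∘ p1 P X (wth P Y Z)).

Record ResourceComonad (C : Category) (M : SymMonClosed C) (P : Cartesian C) := {
  bang : C -> C;
  bang_hom : forall X Y : C, hom X Y -> hom (bang X) (bang Y);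
  bang_id : forall X : C, bang_hom (idm X) = idm (bang X);
  bang_comp : forall (X Y Z : C) (f : hom X Y) (g : hom Y Z),
      bang_hom (g ∘ f) = bang_hom g ∘ bang_hom f;
  der : forall X : C, hom (bang X) X;
  dig : forall X : C, hom (bang X) (bang (bang X));
  der_nat : forall (X Y : C) (f : hom X Y), f ∘ der X = der Y ∘ bang_hom f;
  dig_nat : forall (X Y : C) (f : hom X Y),
      bang_hom (bang_hom f) ∘ dig X = dig Y ∘ bang_hom f;
  comonad_l : forall X : C, der (bang X) ∘ dig X = idm (bang X);
  comonad_r : forall X : C, bang_hom (der X) ∘ dig X = idm (bang X);
  comonad_a : forall X : C, dig (bang X) ∘ dig X = bang_hom (dig X) ∘ dig X;
  m0 : hom (unitob M) (bang (top P));
  m0_inv : hom (bang (top P)) (unitob M);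
  m0_iso1 : m0_inv ∘ m0 = idm _;
  m0_iso2 : m0 ∘ m0_inv = idm _;
  m2 : forall X0 X1 : C, hom (tens M (bang X0) (bang X1)) (bang (wth P X0 X1));
  m2_inv : forall X0 X1 : C, hom (bang (wth P X0 X1)) (tens M (bang X0) (bang X1));
  m2_iso1 : forall X0 X1 : C, m2_inv X0 X1 ∘ m2 X0 X1 = idm _;
  m2_iso2 : forall X0 X1 : C, m2 X0 X1 ∘ m2_inv X0 X1 = idm _;
  m2_nat : forall (X0 X1 Y0 Y1 : C) (f0 : hom X0 Y0) (f1 : hom X1 Y1),
      m2 Y0 Y1 ∘ tens_hom M (bang_hom f0) (bang_hom f1)
      = bang_hom (wth_hom P f0 f1) ∘ m2 X0 X1;
  (* ! is strong monoidal from (&,⊤) to (⊗,1) *)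
  m2_assoc : forall X Y Z : C,
      m2 (wth P X Y) Z ∘ tens_hom M (m2 X Y) (idm (bang Z))
      = bang_hom (wth_assoc_inv P X Y Z) ∘ m2 X (wth P Y Z)
        ∘ tens_hom M (idm (bang X)) (m2 Y Z) ∘ assoc M (bang X) (bang Y) (bang Z);
  m2_unit : forall X : C,
      bang_hom (p1 P (top P) X) ∘ m2 (top P) X ∘ tens_hom M m0 (idm (bang X))
      = lunit M (bang X);
  m2_symm : forall X Y : C,
      m2 Y X ∘ symm M (bang X) (bang Y)
      = bang_hom (pair P (p1 P X Y) (p0 P X Y)) ∘ m2 X Y;
  m2_dig : forall X Y : C,
      m2 (bang X) (bang Y) ∘ tens_hom M (dig X) (dig Y)
      = bang_hom (pair P (bang_hom (p0 P X Y)) (bang_hom (p1 P X Y)))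
        ∘ dig (wth P X Y) ∘ m2 X Y
}.

Record SumData (C : Category) := {
  zero : forall X Y : C, hom X Y;
  S : C -> C;
  S_hom : forall X Y : C, hom X Y -> hom (S X) (S Y);
  pi0 : forall X : C, hom (S X) X;
  pi1 : forall X : C, hom (S X) X;
  sig : forall X : C, hom (S X) X
}.

(* psum D f0 f1 g : f0 and f1 are summable (witness <f0,f1> : X -> SY)
   and f0 + f1 = σ ∘ <f0,f1> = g *)
Definition psum {C : Category} (D : SumData C) {X Y : C} (f0 f1 g : hom X Y) : Prop :=
  exists w : hom X (S D Y), pi0 D Y ∘ w = f0 /\ pi1 D Y ∘ w = f1 /\ g = sig D Y ∘ w.

Record SumStruct (C : Category) (M : SymMonClosed C) (P : Cartesian C) (D : SumData C) := {
  zero_comp_l : forall (X Y Z : C) (f : hom X Y), zero D Y Z ∘ f = zero D X Z;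
  zero_comp_r : forall (X Y Z : C) (g : hom Y Z), g ∘ zero D X Y = zero D X Z;
  S_id : forall X : C, S_hom D (idm X) = idm (S D X);
  S_comp : forall (X Y Z : C) (f : hom X Y) (g : hom Y Z),
      S_hom D (g ∘ f) = S_hom D g ∘ S_hom D f;
  pi0_nat : forall (X Y : C) (f : hom X Y), pi0 D Y ∘ S_hom D f = f ∘ pi0 D X;
  pi1_nat : forall (X Y : C) (f : hom X Y), pi1 D Y ∘ S_hom D f = f ∘ pi1 D X;
  sig_nat : forall (X Y : C) (f : hom X Y), sig D Y ∘ S_hom D f = f ∘ sig D X;
  pi_monic : forall (X Y : C) (f g : hom X (S D Y)),
      pi0 D Y ∘ f = pi0 D Y ∘ g -> pi1 D Y ∘ f = pi1 D Y ∘ g -> f = g;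
  (* homsets are partial commutative monoids with neutral element 0 *)
  psum_zero_r : forall (X Y : C) (f : hom X Y), psum D f (zero D X Y) f;
  psum_zero_l : forall (X Y : C) (f : hom X Y), psum D (zero D X Y) f f;
  psum_comm : forall (X Y : C) (f g h : hom X Y), psum D f g h -> psum D g f h;
  psum_assoc : forall (X Y : C) (f g k u v : hom X Y),
      psum D f g u -> psum D u k v -> exists w, psum D g k w /\ psum D f w v;
  psum_comp : forall (W X Y Z : C) (l : hom W X) (k : hom Y Z) (f g h : hom X Y),
      psum D f g h -> psum D (k ∘ f ∘ l) (k ∘ g ∘ l) (k ∘ h ∘ l);
  tens_zero_l : forall (X X' Y Y' : C) (g : hom Y Y'),
      tens_hom M (zero D X X') g = zero D _ _;
  tens_zero_r : forall (X X' Y Y' : C) (f : hom X X'),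
      tens_hom M f (zero D Y Y') = zero D _ _;
  psum_tens_l : forall (X X' Y Y' : C) (f g h : hom X X') (k : hom Y Y'),
      psum D f g h -> psum D (tens_hom M f k) (tens_hom M g k) (tens_hom M h k);
  psum_tens_r : forall (X X' Y Y' : C) (k : hom X X') (f g h : hom Y Y'),
      psum D f g h -> psum D (tens_hom M k f) (tens_hom M k g) (tens_hom M k h);
  S_wth : forall X0 X1 : C, S D (wth P X0 X1) = wth P (S D X0) (S D X1);
  S_p0 : forall X0 X1 : C,
      S_hom D (p0 P X0 X1) = p0 P (S D X0) (S D X1) ∘ cast (S_wth X0 X1);
  S_p1 : forall X0 X1 : C,
      S_hom D (p1 P X0 X1) = p1 P (S D X0) (S D X1) ∘ cast (S_wth X0 X1);
  iota0 : forall X : C, hom X (S D X);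
  iota0_pi0 : forall X : C, pi0 D X ∘ iota0 X = idm X;
  iota0_pi1 : forall X : C, pi1 D X ∘ iota0 X = zero D X X;
  flip : forall X : C, hom (S D (S D X)) (S D (S D X));
  flip_00 : forall X : C, pi0 D X ∘ pi0 D (S D X) ∘ flip X = pi0 D X ∘ pi0 D (S D X);
  flip_01 : forall X : C, pi0 D X ∘ pi1 D (S D X) ∘ flip X = pi1 D X ∘ pi0 D (S D X);
  flip_10 : forall X : C, pi1 D X ∘ pi0 D (S D X) ∘ flip X = pi0 D X ∘ pi1 D (S D X);
  flip_11 : forall X : C, pi1 D X ∘ pi1 D (S D X) ∘ flip X = pi1 D X ∘ pi1 D (S D X);
  tau : forall X : C, hom (S D (S D X)) (S D X);
  tau_pi0 : forall X : C, pi0 D X ∘ tau X = pi0 D X ∘ pi0 D (S D X);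
  tau_pi1 : forall X : C,
      psum D (pi1 D X ∘ pi0 D (S D X)) (pi0 D X ∘ pi1 D (S D X)) (pi1 D X ∘ tau X);
  phi0 : forall X0 X1 : C, hom (tens M (S D X0) X1) (S D (tens M X0 X1));
  phi0_pi0 : forall X0 X1 : C,
      pi0 D _ ∘ phi0 X0 X1 = tens_hom M (pi0 D X0) (idm X1);
  phi0_pi1 : forall X0 X1 : C,
      pi1 D _ ∘ phi0 X0 X1 = tens_hom M (pi1 D X0) (idm X1);
  phi1 : forall X0 X1 : C, hom (tens M X0 (S D X1)) (S D (tens M X0 X1));
  phi1_pi0 : forall X0 X1 : C,
      pi0 D _ ∘ phi1 X0 X1 = tens_hom M (idm X0) (pi0 D X1);
  phi1_pi1 : forall X0 X1 : C,
      pi1 D _ ∘ phi1 X0 X1 = tens_hom M (idm X0) (pi1 D X1);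
  Lmap : forall X0 X1 : C, hom (tens M (S D X0) (S D X1)) (S D (tens M X0 X1));
  Lmap_pi0 : forall X0 X1 : C,
      pi0 D _ ∘ Lmap X0 X1 = tens_hom M (pi0 D X0) (pi0 D X1);
  Lmap_pi1 : forall X0 X1 : C,
      psum D (tens_hom M (pi1 D X0) (pi0 D X1)) (tens_hom M (pi0 D X0) (pi1 D X1))
             (pi1 D _ ∘ Lmap X0 X1)
}.

Record CohDiff (C : Category) (M : SymMonClosed C) (P : Cartesian C)
    (R : ResourceComonad M P) (D : SumData C) (SS : SumStruct M P D) := {
  dif : forall X : C, hom (bang R (S D X)) (S D (bang R X));
  dif_nat : forall (X Y : C) (f : hom X Y),
      S_hom D (bang_hom R f) ∘ dif X = dif Y ∘ bang_hom R (S_hom D f);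
  dif_pi0 : forall X : C, pi0 D _ ∘ dif X = bang_hom R (pi0 D X);
  dif_iota0 : forall X : C, dif X ∘ bang_hom R (iota0 SS X) = iota0 SS (bang R X);
  dif_tau : forall X : C,
      tau SS (bang R X) ∘ S_hom D (dif X) ∘ dif (S D X) = dif X ∘ bang_hom R (tau SS X);
  dif_der : forall X : C, S_hom D (der R X) ∘ dif X = der R (S D X);
  dif_dig : forall X : C,
      S_hom D (dig R X) ∘ dif X = dif (bang R X) ∘ bang_hom R (dif X) ∘ dig R (S D X);
  dif_m0 : S_hom D (m0_inv R) ∘ dif (top P)
           = iota0 SS (unitob M) ∘ m0_inv R ∘ bang_hom R (zero D (S D (top P)) (top P));
  dif_m2 : forall X0 X1 : C,
      S_hom D (m2_inv R X0 X1) ∘ dif (wth P X0 X1)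
      = Lmap SS (bang R X0) (bang R X1) ∘ tens_hom M (dif X0) (dif X1)
        ∘ m2_inv R (S D X0) (S D X1) ∘ bang_hom R (cast (S_wth SS X0 X1));
  dif_flip : forall X : C,
      flip SS (bang R X) ∘ S_hom D (dif X) ∘ dif (S D X)
      = S_hom D (dif X) ∘ dif (S D X) ∘ bang_hom R (flip SS X)
}.

(* Through the Seely isomorphism, ∂ on a product is L ∘ (∂ ⊗ ∂).  Precomposing
   with !(id & ι0) turns the second factor into ∂ ∘ !ι0 = ι0, and L ∘ (id ⊗ ι0)
   is the strength φ0 because its second component is π1 ⊗ id + π0 ⊗ 0; the
   other equation is symmetric. *)

Lemma cast_sym_r (C : Category) (X Y : C) (e : X = Y) : cast e ∘ cast (eq_sym e) = idm Y.
Proof. destruct e; apply comp_id_l. Qed.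

Section CoherentDifferentiation.

Context {C : Category} (M : SymMonClosed C) (P : Cartesian C).
Context (D : SumData C) (SS : SumStruct M P D).

Lemma psum_unique {X Y : C} {f g h h' : hom X Y} :
  psum D f g h -> psum D f g h' -> h = h'.
Proof.
  intros [w [Hw0 [Hw1 ->]]] [w' [Hw0' [Hw1' ->]]].
  replace w' with w; [reflexivity |].
  apply (pi_monic SS); congruence.
Qed.

Lemma tens_hom_split_l {X X' Y Y' : C} (f : hom X X') (g : hom Y Y') :
  tens_hom M f g = tens_hom M (idm X') g ∘ tens_hom M f (idm Y).
Proof. now rewrite <- tens_comp, comp_id_l, comp_id_r. Qed.

Lemma tens_hom_split_r {X X' Y Y' : C} (f : hom X X') (g : hom Y Y') :
  tens_hom M f g = tens_hom M f (idm Y') ∘ tens_hom M (idm X) g.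
Proof. now rewrite <- tens_comp, comp_id_l, comp_id_r. Qed.

Lemma Lmap_iota0_r (A B : C) :
  Lmap SS A B ∘ tens_hom M (idm (S D A)) (iota0 SS B) = phi0 SS A B.
Proof.
  apply (pi_monic SS).
  - now rewrite comp_assoc, Lmap_pi0, phi0_pi0, <- tens_comp, comp_id_r, iota0_pi0.
  - rewrite comp_assoc, phi0_pi1.
    pose proof (psum_comp SS (tens_hom M (idm (S D A)) (iota0 SS B)) (idm _)
                  (Lmap_pi1 SS A B)) as Hsum.
    rewrite !comp_id_l, <- !tens_comp, !comp_id_r, iota0_pi0, iota0_pi1,
      (tens_zero_r SS) in Hsum.
    exact (psum_unique Hsum (psum_zero_r SS _)).
Qed.

Lemma Lmap_iota0_l (A B : C) :
  Lmap SS A B ∘ tens_hom M (iota0 SS A) (idm (S D B)) = phi1 SS A B.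
Proof.
  apply (pi_monic SS).
  - now rewrite comp_assoc, Lmap_pi0, phi1_pi0, <- tens_comp, comp_id_r, iota0_pi0.
  - rewrite comp_assoc, phi1_pi1.
    pose proof (psum_comp SS (tens_hom M (iota0 SS A) (idm (S D B))) (idm _)
                  (Lmap_pi1 SS A B)) as Hsum.
    rewrite !comp_id_l, <- !tens_comp, !comp_id_r, iota0_pi0, iota0_pi1,
      (tens_zero_l SS) in Hsum.
    exact (psum_unique Hsum (psum_zero_l SS _)).
Qed.

Context (R : ResourceComonad M P) (Df : CohDiff R SS).

Lemma dif_wth_Seely (X0 X1 : C) :
  dif Df (wth P X0 X1) ∘ bang_hom R (cast (eq_sym (S_wth SS X0 X1)))
  = S_hom D (m2 R X0 X1) ∘ Lmap SS (bang R X0) (bang R X1)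
    ∘ tens_hom M (dif Df X0) (dif Df X1) ∘ m2_inv R (S D X0) (S D X1).
Proof.
  rewrite <- (comp_id_l (dif Df _)), <- (S_id SS), <- (m2_iso2 R), (S_comp SS).
  rewrite <- !comp_assoc, (comp_assoc _ (dif Df _)), (dif_m2 Df).
  now rewrite <- !comp_assoc, <- (bang_comp R), cast_sym_r, (bang_id R), comp_id_r.
Qed.

Lemma dif_wth_m2 (X0 X1 Y0 Y1 : C) (f0 : hom Y0 (S D X0)) (f1 : hom Y1 (S D X1)) :
  dif Df (wth P X0 X1) ∘ bang_hom R (cast (eq_sym (S_wth SS X0 X1)))
    ∘ bang_hom R (wth_hom P f0 f1) ∘ m2 R Y0 Y1
  = S_hom D (m2 R X0 X1) ∘ Lmap SS (bang R X0) (bang R X1)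
    ∘ tens_hom M (dif Df X0 ∘ bang_hom R f0) (dif Df X1 ∘ bang_hom R f1).
Proof.
  rewrite dif_wth_Seely, <- !comp_assoc, <- (m2_nat R).
  now rewrite (comp_assoc _ (m2 R _ _)), (m2_iso1 R), comp_id_l, <- (tens_comp M).
Qed.

End CoherentDifferentiation.

Theorem mainTheorem6 (C : Category) (M : SymMonClosed C) (P : Cartesian C)
  (R : ResourceComonad M P) (D : SumData C) (SS : SumStruct M P D)
  (Df : CohDiff R SS) (X0 X1 : C) :
  dif Df (wth P X0 X1) ∘ bang_hom R (cast (eq_sym (S_wth SS X0 X1)))
    ∘ bang_hom R (wth_hom P (idm (S D X0)) (iota0 SS X1)) ∘ m2 R (S D X0) X1
  = S_hom D (m2 R X0 X1) ∘ phi0 SS (bang R X0) (bang R X1)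
    ∘ tens_hom M (dif Df X0) (idm (bang R X1))
  /\
  dif Df (wth P X0 X1) ∘ bang_hom R (cast (eq_sym (S_wth SS X0 X1)))
    ∘ bang_hom R (wth_hom P (iota0 SS X0) (idm (S D X1))) ∘ m2 R X0 (S D X1)
  = S_hom D (m2 R X0 X1) ∘ phi1 SS (bang R X0) (bang R X1)
    ∘ tens_hom M (idm (bang R X0)) (dif Df X1).
Proof.
  split; rewrite dif_wth_m2, (bang_id R), comp_id_r, (dif_iota0 Df).
  - now rewrite (tens_hom_split_l M (dif Df X0)), comp_assoc, <- (comp_assoc _ (Lmap SS _ _)), Lmap_iota0_r.
  - now rewrite (tens_hom_split_r M _ (dif Df X1)), comp_assoc, <- (comp_assoc _ (Lmap SS _ _)), Lmap_iota0_l.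
Qed.
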